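(* Let $\mu:\mathbb{R}^{n\times n}\to\mathbb{R}$ be the matrix measure induced by a vector norm $|\cdot|$ on $\mathbb{R}^n$, and suppose $\mu$ satisfies any one of the following (equivalent) conditions: (1) $|\cdot|$ is orthant-monotonic; (2) $\mu(-D)\le 0$ for every $D\in\mathbb{D}^n_{\ge0}$; (3) $\mu(D)=\max_i\{d_{ii}\}$ for every $D\in\mathbb{D}^n_{\ge0}$; (4) there exists $A\in\mathbb{R}^{n\times n}$ with $\mu(A-D)<0$ for all $D\in\mathbb{D}^n_{\ge0}$. Then $\mu(D)=\max_i\{d_{ii}\}$ for every diagonal matrix $D\in\mathbb{R}^{n\times n}$ (with arbitrary real diagonal entries).
   Context: $\mathbb{D}^n_{\ge 0}$ denotes the set of $n\times n$ diagonal matrices with nonnegative diagonal entries. For a vector norm $|\cdot|$ on $\mathbb{R}^n$, the induced matrix norm is $\|A\|=\max_{|x|=1}|Ax|$ and the induced matrix measure is $\mu(A)=\lim_{\varepsilon\to0^+}(\|I_n+\varepsilon A\|-1)/\varepsilon$. A norm $|\cdot|$ on $\mathbb{R}^n$ is orthant-monotonic if for all $x,y\in\mathbb{R}^n$: whenever $x_iy_i\ge 0$ and $|x_i|\le|y_i|$ for all $i$, then $|x|\le|y|$. *)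

From HB Require Import structures.
From mathcomp Require Import all_boot all_order all_algebra.
From mathcomp Require Import all_classical all_reals all_analysis.
Set Implicit Arguments. Unset Strict Implicit. Unset Printing Implicit Defensive.
Import Order.TTheory GRing.Theory Num.Theory.
Import numFieldNormedType.Exports.
Local Open Scope classical_set_scope.
Local Open Scope ring_scope.

Definition is_vnorm (R : realType) (n : nat) (N : 'cV[R]_n -> R) : Prop :=
  [/\ forall x, 0 <= N x,
      forall x, N x = 0 -> x = 0,
      forall (a : R) x, N (a *: x) = `|a| * N x
    & forall x y, N (x + y) <= N x + N y].

Definition induced_norm (R : realType) (n : nat) (N : 'cV[R]_n -> R)
  (A : 'M[R]_n) : R :=
  sup [set N (A *m x) | x in [set x : 'cV[R]_n | N x = 1]].

Definition matrix_measure (R : realType) (n : nat) (N : 'cV[R]_n -> R)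
  (A : 'M[R]_n) : R :=
  lim ((fun e : R => (induced_norm N (1%:M + e *: A) - 1) / e) @ 0^'+).

Definition orthant_monotonic (R : realType) (n : nat) (N : 'cV[R]_n -> R) : Prop :=
  forall x y : 'cV[R]_n,
    (forall i, 0 <= x i 0 * y i 0 /\ `|x i 0| <= `|y i 0|) -> N x <= N y.

(* D in D^n_{>=0}: diag_mx d with all entries of d nonnegative. *)
Definition nonneg_row (R : realType) (n : nat) (d : 'rV[R]_n) : Prop :=
  forall i, 0 <= d 0 i.

Definition max_entry (R : realType) (n : nat) (d : 'rV[R]_n.+1) : R :=
  \big[Num.max/d 0 ord0]_(i < n.+1) d 0 i.

From mathcomp Require Import all_boot all_order all_algebra.
From mathcomp Require Import all_classical all_reals all_analysis.
From mathcomp Require Import ring lra.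
Import Order.TTheory GRing.Theory Num.Theory.
Import numFieldNormedType.Exports.
Set Implicit Arguments. Unset Strict Implicit. Unset Printing Implicit Defensive.
Local Open Scope classical_set_scope.
Local Open Scope ring_scope.

(* The induced norm is finite because N dominates a multiple of each
   coordinate (N attains a positive minimum on the compact unit sphere of the
   sup norm).  The matrix measure is the infimum over e > 0 of the nondecreasing
   difference quotients (|||1 + e A||| - 1) / e.  Hence it is subadditive,
   satisfies l mu(A) <= mu(l A) for l > 0 and mu(c 1) <= c, and bounds every
   diagonal entry d_k of D = diag d from above (test |||1 + e D||| on e_k).
   Each condition implies (2), mu(-D) <= 0 for D >= 0:
   (1) makes 1 - e D a contraction for small e; (3) applies to the
   nonnegative matrix max(d) 1 - D; under (4), mu(-l D) >= l mu(-D) would be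
   unbounded while mu(-l D) <= mu(A - l D) + mu(-A) < mu(-A).
   Finally (2) gives mu(D) <= max(d) + mu(-(max(d) 1 - D)) <= max(d). *)

Section VectorNorm.
Variables (R : realType) (n : nat) (N : 'cV[R]_n -> R).
Hypothesis normN : is_vnorm N.

Lemma vnorm_ge0 x : 0 <= N x. Proof. by case: normN. Qed.
Lemma vnorm_eq0 x : N x = 0 -> x = 0. Proof. by case: normN => _ + _ _; apply. Qed.
Lemma vnormZ a x : N (a *: x) = `|a| * N x. Proof. by case: normN. Qed.
Lemma ler_vnormD x y : N (x + y) <= N x + N y. Proof. by case: normN. Qed.

Lemma vnorm0 : N 0 = 0.
Proof. by rewrite -(scale0r (0 : 'cV_n)) vnormZ normr0 mul0r. Qed.

Lemma vnormN x : N (- x) = N x.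
Proof. by rewrite -scaleN1r vnormZ normrN1 mul1r. Qed.

Lemma vnorm_gt0 x : x != 0 -> 0 < N x.
Proof.
by move=> x0; rewrite lt_def vnorm_ge0 andbT; apply: contraNneq x0 => /vnorm_eq0->.
Qed.

Lemma vnorm_normalize x : x != 0 -> N ((N x)^-1 *: x) = 1.
Proof.
by move=> x0; rewrite vnormZ normfV ger0_norm ?vnorm_ge0 // mulVf // gt_eqF // vnorm_gt0.
Qed.

Lemma vnorm_sum (I : Type) (r : seq I) (F : I -> 'cV[R]_n) :
  N (\sum_(i <- r) F i) <= \sum_(i <- r) N (F i).
Proof.
elim: r => [|a r IH]; first by rewrite !big_nil vnorm0.
by rewrite !big_cons (le_trans (ler_vnormD _ _)) // lerD.
Qed.

Lemma ler_dist_vnorm x y : `|N x - N y| <= N (x - y).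
Proof.
have := ler_vnormD (x - y) y; have := ler_vnormD (y - x) x.
rewrite !subrK -[N (y - x)]vnormN opprB => hy hx.
by rewrite ler_norml; apply/andP; split; lra.
Qed.

Lemma vnorm_le_sum_coord x : N x <= \sum_i `|x i 0| * N (delta_mx i 0).
Proof.
rewrite {1}(matrix_sum_delta x); apply: le_trans (vnorm_sum _ _) _.
by apply: ler_sum => i _; rewrite big_ord1 vnormZ.
Qed.

End VectorNorm.

Lemma mx_norm_entry_le (R : realDomainType) (m n : nat) (A : 'M[R]_(m, n)) i j :
  `|A i j| <= `|A|.
Proof.
by rewrite [leRHS]/Num.norm /= mx_normrE; apply/bigmax_geP; right; exists (i, j).
Qed.

Lemma delta_mx_neq0 (R : nzRingType) (m n : nat) (i : 'I_m) (j : 'I_n) :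
  delta_mx i j != 0 :> 'M[R]_(m, n).
Proof.
by apply/eqP => /matrixP /(_ i j); rewrite !mxE !eqxx; apply/eqP; exact: oner_neq0.
Qed.

Section FiniteDimensionalNorm.
Variables (R : realType) (n : nat) (N : 'cV[R]_n.+1 -> R).
Hypothesis normN : is_vnorm N.

(* Stated on row vectors because [bounded_closed_compact] is only available
   for ['rV]. *)
Lemma continuous_vnorm_trmx : continuous (fun v : 'rV[R]_n.+1 => N v^T).
Proof.
pose K := \sum_i N (delta_mx i 0).
have K_ge0 : 0 <= K by rewrite sumr_ge0 // => i _; exact: (vnorm_ge0 normN).
have lipN v w : `|N v^T - N w^T| <= K * `|v - w|.
  apply: le_trans (ler_dist_vnorm normN _ _) _; rewrite -linearB /=.
  apply: le_trans (vnorm_le_sum_coord normN _) _; rewrite mulr_suml.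
  apply: ler_sum => i _; rewrite mulrC ler_wpM2l ?(vnorm_ge0 normN) // mxE.
  exact: mx_norm_entry_le.
move=> v; apply/(cvgrPdist_le (FF := nbhs_filter v)) => eps eps_gt0.
near=> w; apply: le_trans (lipN _ _) _.
apply: (@le_trans _ _ ((K + 1) * `|v - w|)); first by rewrite ler_wpM2r ?lerDl.
rewrite -ler_pdivlMl ?ltr_wpDl //; near: w.
by apply: cvgr_dist_le; [exact: cvg_id | rewrite mulr_gt0 ?invr_gt0 ?ltr_wpDl].
Unshelve. all: by end_near. Qed.

Lemma vnorm_coord_lbound :
  exists2 c, 0 < c & forall (x : 'cV[R]_n.+1) i, c * `|x i 0| <= N x.
Proof.
pose S := [set v : 'rV[R]_n.+1 | `|v| = 1].
have normalize_in_S v : v != 0 -> S (`|v|^-1 *: v).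
  by move=> v0; rewrite /S /= normrZ normfV normr_id mulVf // normr_eq0.
have S_compact : compact S.
  apply: bounded_closed_compact.
    by exists 1; split => // M M1 v Sv /=; rewrite Sv ltW.
  apply: (@preimage_closed _ R Num.norm [set 1]); last exact: closed_eq.
  by move=> v _; exact: norm_continuous.
have S_neq0 : S !=set0 := ex_intro _ _ (normalize_in_S _ (delta_mx_neq0 _ 0 0)).
have [c Sc c_min] :=
  compact_EVT_min S_neq0 S_compact (continuous_subspaceT continuous_vnorm_trmx).
have cT_neq0 : c^T != 0.
  by move: Sc; rewrite inE trmx_eq0 -normr_eq0 /S /= => ->; rewrite oner_eq0.
exists (N c^T) => [|x i]; first exact: (vnorm_gt0 normN).
have [->|x_neq0] := eqVneq x 0; first by rewrite mxE normr0 mulr0 (vnorm_ge0 normN).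
have xT_neq0 : x^T != 0 by rewrite trmx_eq0.
have := c_min _ (mem_set (normalize_in_S _ xT_neq0)).
rewrite linearZ /= trmxK (vnormZ normN) normfV normr_id ler_pdivlMl ?normr_gt0 //.
apply: le_trans; rewrite mulrC ler_wpM2r ?(vnorm_ge0 normN) //.
by have := mx_norm_entry_le x^T 0 i; rewrite mxE.
Qed.

Lemma exists_vnorm1 : exists x : 'cV[R]_n.+1, N x = 1.
Proof.
exists ((N (delta_mx 0 0))^-1 *: delta_mx 0 0).
by rewrite (vnorm_normalize normN) ?delta_mx_neq0.
Qed.

Lemma vnorm_mulmx_bound (A : 'M[R]_n.+1) :
  exists M, forall x, N (A *m x) <= M * N x.
Proof.
have [c c_gt0 hc] := vnorm_coord_lbound.
exists (\sum_i (\sum_j `|A i j|) / c * N (delta_mx i 0)) => x.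
apply: le_trans (vnorm_le_sum_coord normN _) _; rewrite mulr_suml.
apply: ler_sum => i _; rewrite mulrAC ler_wpM2r ?(vnorm_ge0 normN) // mxE.
apply: le_trans (ler_norm_sum _ _ _) _; rewrite -mulrA mulr_suml.
by apply: ler_sum => j _; rewrite normrM ler_wpM2l // ler_pdivlMl.
Qed.

Lemma induced_norm_ub A x : N x = 1 -> N (A *m x) <= induced_norm N A.
Proof.
move=> x1; apply: ub_le_sup; last by exists x.
have [M hM] := vnorm_mulmx_bound A.
by exists M => _ [y y1 <-]; have := hM y; rewrite y1 mulr1.
Qed.

Lemma induced_norm_le A M :
  (forall x, N x = 1 -> N (A *m x) <= M) -> induced_norm N A <= M.
Proof.
move=> hM; apply: ge_sup => [|_ [y y1 <-]]; last exact: hM.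
by have [x x1] := exists_vnorm1; exists (N (A *m x)), x.
Qed.

Lemma induced_normD A B :
  induced_norm N (A + B) <= induced_norm N A + induced_norm N B.
Proof.
apply: induced_norm_le => x x1; rewrite mulmxDl (le_trans (ler_vnormD normN _ _)) //.
by rewrite lerD ?induced_norm_ub.
Qed.

Lemma induced_normZ_le a A : induced_norm N (a *: A) <= `|a| * induced_norm N A.
Proof.
apply: induced_norm_le => x x1.
by rewrite -scalemxAl (vnormZ normN) ler_wpM2l ?induced_norm_ub.
Qed.

Lemma induced_norm1 : induced_norm N 1%:M = 1.
Proof.
apply/eqP; rewrite eq_le; apply/andP; split.
  by apply: induced_norm_le => x x1; rewrite mul1mx x1.
have [x x1] := exists_vnorm1.
by rewrite -[X in X <= _]x1 -[x in N x]mul1mx induced_norm_ub.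
Qed.

End FiniteDimensionalNorm.

Section MatrixMeasure.
Variables (R : realType) (n : nat) (N : 'cV[R]_n.+1 -> R).
Hypothesis normN : is_vnorm N.
Local Notation mu := (matrix_measure N).

Definition measure_quot (A : 'M[R]_n.+1) (e : R) : R :=
  (induced_norm N (1%:M + e *: A) - 1) / e.

Lemma measure_quot_ge A e : 0 < e -> - induced_norm N A <= measure_quot A e.
Proof.
move=> e_gt0; have := induced_normD normN (1%:M + e *: A) (- (e *: A)).
rewrite addrK induced_norm1 // -scaleNr.
have := induced_normZ_le normN (- e) A; rewrite normrN gtr0_norm //.
by rewrite /measure_quot ler_pdivlMr //; lra.
Qed.

(* [e |-> |||1 + e A|||] is convex and equals 1 at 0, so its difference
   quotients at 0 are nondecreasing. *)
Lemma le_measure_quot A e1 e2 :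
  0 < e1 -> e1 <= e2 -> measure_quot A e1 <= measure_quot A e2.
Proof.
move=> e1_gt0 e12; have e2_gt0 : 0 < e2 by apply: lt_le_trans e12.
pose t := e1 / e2.
have t_gt0 : 0 < t by rewrite divr_gt0.
have t_le1 : t <= 1 by rewrite ler_pdivrMr // mul1r.
have convex : 1%:M + e1 *: A = (1 - t) *: 1%:M + t *: (1%:M + e2 *: A).
  by rewrite scalerDr scalerA divfK ?gt_eqF // addrA scalerBl scale1r subrK.
have : induced_norm N (1%:M + e1 *: A)
         <= (1 - t) + t * induced_norm N (1%:M + e2 *: A).
  rewrite convex (le_trans (induced_normD normN _ _)) // lerD //.
    rewrite (le_trans (induced_normZ_le normN _ _)) // induced_norm1 // mulr1.
    by rewrite ger0_norm // subr_ge0.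
  by rewrite (le_trans (induced_normZ_le normN _ _)) // gtr0_norm.
rewrite /measure_quot ler_pdivrMr // -/t.
have -> : (induced_norm N (1%:M + e2 *: A) - 1) / e2 * e1
          = t * induced_norm N (1%:M + e2 *: A) - t by rewrite /t; ring.
lra.
Qed.

Lemma measure_quot_bounded A : has_lbound (measure_quot A @` `]0, +oo[).
Proof.
exists (- induced_norm N A) => _ [e + <-].
by rewrite /= in_itv /= andbT; exact: measure_quot_ge.
Qed.

Lemma matrix_measure_inf A : mu A = inf (measure_quot A @` `]0, +oo[).
Proof.
apply: cvg_lim => //; apply: nondecreasing_at_right_cvgr => //.
  by move=> e1 e2; rewrite in_itv /= andbT => e1_gt0 _; exact: le_measure_quot.
exact: measure_quot_bounded.
Qed.

Lemma matrix_measure_le_quot A e : 0 < e -> mu A <= measure_quot A e.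
Proof.
move=> e_gt0; rewrite matrix_measure_inf; apply: ge_inf; first exact: measure_quot_bounded.
by exists e => //; rewrite /= in_itv /= andbT.
Qed.

Lemma matrix_measure_approx A eps :
  0 < eps -> exists2 e, 0 < e & measure_quot A e < mu A + eps.
Proof.
move=> eps_gt0; rewrite matrix_measure_inf.
have quot_neq0 : measure_quot A @` `]0, +oo[ !=set0.
  by exists (measure_quot A 1), 1 => //; rewrite /= in_itv /= andbT.
have [_ [e + <-] ?] := inf_adherent eps_gt0 (conj quot_neq0 (measure_quot_bounded A)).
by rewrite /= in_itv /= andbT; exists e.
Qed.

Lemma measure_quotD A B e :
  0 < e -> measure_quot (A + B) e <= measure_quot A (2 * e) + measure_quot B (2 * e).
Proof.
move=> e_gt0.
have midpoint : 1%:M + e *: (A + B) =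
  2^-1 *: (1%:M + (2 * e) *: A) + 2^-1 *: (1%:M + (2 * e) *: B).
  by apply/matrixP => i j; rewrite !mxE; field.
have : induced_norm N (1%:M + e *: (A + B)) <=
    2^-1 * induced_norm N (1%:M + (2 * e) *: A)
    + 2^-1 * induced_norm N (1%:M + (2 * e) *: B).
  rewrite midpoint (le_trans (induced_normD normN _ _)) //.
  by rewrite lerD // (le_trans (induced_normZ_le normN _ _)) // ger0_norm.
rewrite /measure_quot ler_pdivrMr //.
set X := induced_norm N (1%:M + (2 * e) *: A).
set Y := induced_norm N (1%:M + (2 * e) *: B).
have -> : ((X - 1) / (2 * e) + (Y - 1) / (2 * e)) * e = 2^-1 * X + 2^-1 * Y - 1.
  by field; rewrite gt_eqF.
lra.
Qed.

Lemma matrix_measureD A B : mu (A + B) <= mu A + mu B.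
Proof.
apply/ler_addgt0Pr => eps eps_gt0.
have eps2_gt0 : 0 < eps / 2 by rewrite divr_gt0.
have [e1 e1_gt0 approxA] := matrix_measure_approx A eps2_gt0.
have [e2 e2_gt0 approxB] := matrix_measure_approx B eps2_gt0.
pose e := Num.min e1 e2.
have e_gt0 : 0 < e by rewrite lt_min e1_gt0 e2_gt0.
have e_le1 : e <= e1 by rewrite ge_min lexx.
have e_le2 : e <= e2 by rewrite ge_min lexx orbT.
have e_half_gt0 : 0 < e / 2 by rewrite divr_gt0.
have := measure_quotD A B e_half_gt0.
have -> : 2 * (e / 2) = e by rewrite mulrC divfK ?pnatr_eq0.
have := matrix_measure_le_quot (A + B) e_half_gt0.
have := le_measure_quot A e_gt0 e_le1.
have := le_measure_quot B e_gt0 e_le2.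
lra.
Qed.

Lemma matrix_measure_scalar_le c : mu c%:M <= c.
Proof.
pose e := (`|c| + 1)^-1.
have c1_gt0 : 0 < `|c| + 1 by rewrite ltr_wpDl.
have e_gt0 : 0 < e by rewrite invr_gt0.
have ec_ge0 : 0 <= 1 + e * c.
  have : `|e * c| < 1 by rewrite normrM gtr0_norm // mulrC ltr_pdivrMr // mul1r ltrDl.
  by rewrite ltr_norml => /andP[? _]; lra.
apply: le_trans (matrix_measure_le_quot _ e_gt0) _.
rewrite /measure_quot scale_scalar_mx -raddfD /= -scalemx1.
have := induced_normZ_le normN (1 + e * c) 1%:M.
rewrite induced_norm1 // mulr1 ger0_norm // => h.
by rewrite ler_pdivrMr //; lra.
Qed.

Lemma diag_entry_le_matrix_measure (d : 'rV[R]_n.+1) k : d 0 k <= mu (diag_mx d).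
Proof.
apply/ler_addgt0Pr => eps eps_gt0.
have [e e_gt0 /ltW] := matrix_measure_approx (diag_mx d) eps_gt0; apply: le_trans.
have eigen : diag_mx d *m delta_mx k 0 = d 0 k *: delta_mx k 0 :> 'cV_n.+1.
  apply/matrixP => i j; rewrite mul_diag_mx !mxE.
  by case: eqVneq => [->|_]; rewrite ?mulr0.
pose u : 'cV_n.+1 := (N (delta_mx k 0))^-1 *: delta_mx k 0.
have u1 : N u = 1 by rewrite vnorm_normalize ?delta_mx_neq0.
have := induced_norm_ub normN (1%:M + e *: diag_mx d) u1.
have eigen_u : diag_mx d *m u = d 0 k *: u by rewrite /u -scalemxAr eigen !scalerA mulrC.
rewrite mulmxDl mul1mx -scalemxAl eigen_u scalerA -{1}[u]scale1r -scalerDl.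
rewrite (vnormZ normN) u1 mulr1 => h.
have := ler_norm (1 + e * d 0 k).
by rewrite /measure_quot ler_pdivlMr //; lra.
Qed.

Lemma matrix_measureZ_ge l A : 0 < l -> l * mu A <= mu (l *: A).
Proof.
move=> l_gt0; apply/ler_addgt0Pr => eps eps_gt0.
have [e e_gt0 /ltW] := matrix_measure_approx (l *: A) eps_gt0; apply: le_trans.
have -> : measure_quot (l *: A) e = l * measure_quot A (e * l).
  by rewrite /measure_quot scalerA; field; rewrite ?mulf_neq0 ?gt_eqF.
by rewrite ler_pM2l // matrix_measure_le_quot // mulr_gt0.
Qed.

End MatrixMeasure.

Lemma le_max_entry (R : realType) (n : nat) (d : 'rV[R]_n.+1) i : d 0 i <= max_entry d.
Proof. exact: le_bigmax. Qed.

Lemma max_entry_le (R : realType) (n : nat) (d : 'rV[R]_n.+1) x :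
  (forall i, d 0 i <= x) -> max_entry d <= x.
Proof. by move=> le_x; apply: bigmax_le. Qed.

Definition max_gap (R : realType) (n : nat) (d : 'rV[R]_n.+1) : 'rV[R]_n.+1 :=
  const_mx (max_entry d) - d.

Lemma max_gap_nonneg (R : realType) (n : nat) (d : 'rV[R]_n.+1) : nonneg_row (max_gap d).
Proof. by move=> i; rewrite !mxE subr_ge0 le_max_entry. Qed.

Lemma diag_max_gap (R : realType) (n : nat) (d : 'rV[R]_n.+1) :
  diag_mx (max_gap d) = (max_entry d)%:M - diag_mx d.
Proof. by rewrite linearB /= diag_const_mx. Qed.

Lemma orthant_monotonic_diag_contraction (R : realType) (n : nat) (N : 'cV[R]_n -> R)
    (c : 'rV[R]_n) x :
  orthant_monotonic N -> (forall i, 0 <= c 0 i <= 1) -> N (diag_mx c *m x) <= N x.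
Proof.
move=> monoN c01; apply: monoN => i; rewrite mul_diag_mx mxE.
have /andP[c_ge0 c_le1] := c01 i.
by rewrite -mulrA mulr_ge0 -?expr2 ?sqr_ge0 // normrM ger0_norm // ler_piMl.
Qed.

Section DiagonalMeasure.
Variables (R : realType) (n : nat) (N : 'cV[R]_n.+1 -> R).
Hypothesis normN : is_vnorm N.
Local Notation mu := (matrix_measure N).

Definition neg_diag_measure_nonpos :=
  forall d : 'rV[R]_n.+1, nonneg_row d -> mu (- diag_mx d) <= 0.

Lemma matrix_measure_diag_max :
  neg_diag_measure_nonpos -> forall d : 'rV[R]_n.+1, mu (diag_mx d) = max_entry d.
Proof.
move=> nonpos d; apply/eqP; rewrite eq_le; apply/andP; split; last first.
  by apply: max_entry_le => i; exact: diag_entry_le_matrix_measure.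
have -> : diag_mx d = (max_entry d)%:M + - diag_mx (max_gap d).
  by rewrite diag_max_gap opprB addrC subrK.
rewrite (le_trans (matrix_measureD normN _ _)) // -[leRHS]addr0.
by apply: lerD; [exact: matrix_measure_scalar_le | exact: nonpos (max_gap_nonneg d)].
Qed.

Lemma orthant_monotonic_neg_diag_measure_nonpos :
  orthant_monotonic N -> neg_diag_measure_nonpos.
Proof.
move=> monoN d d_ge0.
have m_ge0 : 0 <= max_entry d := le_trans (d_ge0 0) (le_max_entry d 0).
pose e := (max_entry d + 1)^-1.
have e_gt0 : 0 < e by rewrite invr_gt0 ltr_wpDl.
have ed_le1 i : e * d 0 i <= 1.
  by rewrite mulrC ler_pdivrMr ?ltr_wpDl // mul1r (le_trans (le_max_entry d i)) // lerDl.
apply: le_trans (matrix_measure_le_quot normN _ e_gt0) _.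
suff : induced_norm N (1%:M + e *: - diag_mx d) <= 1.
  by rewrite /measure_quot -subr_le0 => h; rewrite mulr_le0_ge0 // invr_ge0 ltW.
have -> : 1%:M + e *: - diag_mx d = diag_mx (const_mx 1 - e *: d).
  by rewrite linearB linearZ /= diag_const_mx scalerN.
apply: (induced_norm_le normN) => x x1; rewrite -[X in _ <= X]x1.
apply: orthant_monotonic_diag_contraction => // i.
by rewrite !mxE subr_ge0 ed_le1 lerBlDr lerDl (mulr_ge0 (ltW e_gt0) (d_ge0 i)).
Qed.

Lemma nonneg_diag_max_neg_diag_measure_nonpos :
  (forall d : 'rV[R]_n.+1, nonneg_row d -> mu (diag_mx d) = max_entry d) ->
  neg_diag_measure_nonpos.
Proof.
move=> diag_max d d_ge0.
have -> : - diag_mx d = diag_mx (max_gap d) + (- max_entry d)%:M.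
  by rewrite diag_max_gap raddfN /= addrAC subrr add0r.
rewrite (le_trans (matrix_measureD normN _ _)) // (diag_max _ (max_gap_nonneg d)).
rewrite -[leRHS](subrr (max_entry d)) lerD ?matrix_measure_scalar_le //.
by apply: max_entry_le => i; rewrite !mxE lerBlDr lerDl.
Qed.

Lemma stable_shift_neg_diag_measure_nonpos :
  (exists A : 'M[R]_n.+1,
     forall d : 'rV[R]_n.+1, nonneg_row d -> mu (A - diag_mx d) < 0) ->
  neg_diag_measure_nonpos.
Proof.
move=> [A stable] d d_ge0; rewrite leNgt; apply/negP => mu_gt0.
pose l := (`|mu (- A)| + 1) / mu (- diag_mx d).
have l_gt0 : 0 < l by rewrite divr_gt0 ?ltr_wpDl.
have ld_ge0 : nonneg_row (l *: d).
  by move=> i; rewrite mxE (mulr_ge0 (ltW l_gt0) (d_ge0 i)).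
have shift_lt : mu (- diag_mx (l *: d)) < mu (- A).
  have := matrix_measureD normN (A - diag_mx (l *: d)) (- A).
  rewrite (addrC (A - _)) addKr => /le_lt_trans; apply.
  by rewrite -[ltRHS]add0r ltrD2r stable.
have := matrix_measureZ_ge normN (- diag_mx d) l_gt0.
have -> : l *: - diag_mx d = - diag_mx (l *: d) by rewrite linearZ scalerN.
have -> : l * mu (- diag_mx d) = `|mu (- A)| + 1 by rewrite /l divfK ?gt_eqF.
move=> /le_lt_trans /(_ shift_lt) /lt_le_trans /(_ (ler_norm _)).
by rewrite ltNge lerDl ler01.
Qed.

End DiagonalMeasure.

Theorem corollary1 (R : realType) (n : nat) (N : 'cV[R]_n.+1 -> R) :
  is_vnorm N ->
  (orthant_monotonic N
   \/ (forall d : 'rV[R]_n.+1, nonneg_row d ->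
         matrix_measure N (- diag_mx d) <= 0)
   \/ (forall d : 'rV[R]_n.+1, nonneg_row d ->
         matrix_measure N (diag_mx d) = max_entry d)
   \/ (exists A : 'M[R]_n.+1, forall d : 'rV[R]_n.+1, nonneg_row d ->
         matrix_measure N (A - diag_mx d) < 0)) ->
  forall d : 'rV[R]_n.+1, matrix_measure N (diag_mx d) = max_entry d.
Proof.
move=> normN conditions; apply: matrix_measure_diag_max => //.
case: conditions => [monoN|[nonpos|[diag_max|stable]]].
- exact: orthant_monotonic_neg_diag_measure_nonpos.
- exact: nonpos.
- exact: nonneg_diag_max_neg_diag_measure_nonpos.
- exact: stable_shift_neg_diag_measure_nonpos.
Qed.
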